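(* Let $n>2k$, $k\ge t+3$, and let $\mathcal F\subseteq\binom{[n]}{k}$ be a maximal $t$-intersecting family with $\tau_t(\mathcal F)=t+2$ and $\tau_t(\mathcal T_t(\mathcal F))=t+1$. Suppose $\mathcal T_t(\mathcal F)=\left\{T\in\binom{M}{t+2}: |T\cap W|\ge t+1\right\}$ for some $M\in\binom{[n]}{k+2}$ and $W\in\binom{M}{t+2}$. Then: (i) $\mathcal F=\{F\in\binom{[n]}{k}: W\subseteq F\}\cup\{F\in\binom{[n]}{k}: |F\cap W|=t+1,\ F\cap(M\setminus W)\neq\emptyset\}\cup\{F\in\binom{M}{k}: |F\cap W|=t\}$ (i.e. $\mathcal F$ is the Type II family determined by some $M\in\binom{[n]}{k+2}$, $W\in\binom{M}{t+2}$); (ii) $|\mathcal F|>((t+2)(k-t)+1)\binom{n-t-2}{k-t-2}-(t+2)(k-t)^2\binom{n-t-3}{k-t-3}$.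
   Context: A family is $t$-intersecting if any two members meet in at least $t$ elements. A $t$-cover of a family $\mathcal G$ of subsets of $[n]$ is a set $S\subseteq[n]$ with $|S\cap G|\ge t$ for all $G\in\mathcal G$; $\tau_t(\mathcal G)$ is the minimum size of a $t$-cover, and $\mathcal T_t(\mathcal G)$ is the set of all $t$-covers of $\mathcal G$ of size $\tau_t(\mathcal G)$. A $t$-intersecting $\mathcal F\subseteq\binom{[n]}{k}$ is maximal if no $t$-intersecting subfamily of $\binom{[n]}{k}$ properly contains it. *)

From mathcomp Require Import all_boot all_order all_algebra.
Set Implicit Arguments. Unset Strict Implicit. Unset Printing Implicit Defensive.

Section Defs.
Variable n : nat.
Local Notation sT := {set 'I_n}.

Definition ksubsets (X : sT) (k : nat) : {set sT} :=
  [set A : sT | (A \subset X) && (#|A| == k)].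

Definition t_intersecting (t : nat) (G : {set sT}) : Prop :=
  forall A B, A \in G -> B \in G -> t <= #|A :&: B|.

Definition maximal_t_intersecting (k t : nat) (F : {set sT}) : Prop :=
  [/\ F \subset ksubsets setT k, t_intersecting t F &
      forall G : {set sT}, G \subset ksubsets setT k -> t_intersecting t G ->
        F \subset G -> G = F].

Definition tcover (t : nat) (G : {set sT}) (S : sT) : bool :=
  [forall A in G, t <= #|S :&: A|].

(* tau_t(G): minimum size of a t-cover (n.+1 by convention if none exists) *)
Definition tau (t : nat) (G : {set sT}) : nat :=
  \big[minn/n.+1]_(S : sT | tcover t G S) #|S|.

Definition Tcov (t : nat) (G : {set sT}) : {set sT} :=
  [set S : sT | tcover t G S && (#|S| == tau t G)].

Definition typeII (k t : nat) (M W : sT) : {set sT} :=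
  [set F in ksubsets setT k | W \subset F]
  :|: [set F in ksubsets setT k | (#|F :&: W| == t.+1) && (F :&: (M :\: W) != set0)]
  :|: [set F in ksubsets M k | #|F :&: W| == t].

End Defs.

From mathcomp Require Import all_boot all_order all_algebra.
From mathcomp Require Import zify.
Import GRing.Theory Num.Theory.

(* Every (t+2)-subset of M meeting W in at least t+1 points is a t-cover of F,
   and every t-cover of size t+2 lies inside M.  Testing a member G of F
   against the covers (W - w) + m with m ∈ M ∖ W shows that |G ∩ W| = t forces
   G = (G ∩ W) ∪ (M ∖ W); testing it against the non-cover (W - w) + y with
   y ∉ M rules out |G ∩ W| = t+1 together with G ∩ (M ∖ W) = ∅.  So F lies
   inside the Type II family, which is k-uniform and t-intersecting, and
   maximality gives equality.  For the size bound, the Type II family contains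
   the sets W ∪ B with B outside W, the sets (W - w) ∪ {m} ∪ B with m ∈ M ∖ W
   and B outside M, and some set meeting W in t points; these three kinds are
   told apart by |G ∩ W|, and Pascal's rule applied k-t times gives
   C(n-t-2, k-t-2) <= C(n-k-2, k-t-2) + (k-t) C(n-t-3, k-t-3). *)

Section FinsetFacts.
Context {T : finType}.
Implicit Types A B C P S X Y : {set T}.

Lemma cardsU_sub_compl [A B P] : A \subset P -> B \subset ~: P ->
  #|A :|: B| = #|A| + #|B|.
Proof.
move=> AP BP; apply/eqP; rewrite (leq_card_setU A B).2 disjoint_sym.
by rewrite disjoints_subset (subset_trans BP) // setCS.
Qed.

Lemma setIU_sub_compl [X Y P] : X \subset P -> Y \subset ~: P ->
  (X :|: Y) :&: P = X.
Proof.
move=> XP YP; rewrite setIUl (setIidPl XP).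
by rewrite (disjoint_setI0 _) ?setU0 // disjoints_subset.
Qed.

Lemma cardsU1I (m : T) A B : m \notin A ->
  #|(m |: A) :&: B| = (m \in B) + #|A :&: B|.
Proof.
move=> mA; rewrite setIUl.
have [mB|mB] := boolP (m \in B).
  by rewrite (setIidPl _) ?sub1set // cardsU1 inE (negbTE mA).
by rewrite (_ : [set m] :&: B = set0) ?set0U //; apply/disjoint_setI0; rewrite disjoints1.
Qed.

Lemma leq_add_cardsI X Y C :
  #|X :&: C| + #|Y :&: C| <= #|X :&: Y :&: C| + #|C|.
Proof.
rewrite -cardsUI [X :&: Y :&: C]setIIl addnC leq_add2l.
by rewrite subset_leq_card // subUset !subsetIr.
Qed.

Lemma leq_cards_separated3 S A B C (g : T -> nat) i j l :
  A \subset S -> B \subset S -> C \subset S ->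
  {in A, forall x, g x = i} -> {in B, forall x, g x = j} ->
  {in C, forall x, g x = l} ->
  i != j -> j != l -> i != l -> #|A| + #|B| + #|C| <= #|S|.
Proof.
move=> AS BS CS gA gB gC ij jl il.
have /eqP <- : #|A :|: B| == #|A| + #|B|.
  rewrite (leq_card_setU A B).2; apply/pred0P=> x /=.
  by apply/negP=> /andP[/gA a /gB b]; move: ij; rewrite -a -b eqxx.
have /eqP <- : #|A :|: B :|: C| == #|A :|: B| + #|C|.
  rewrite (leq_card_setU _ C).2; apply/pred0P=> x /=.
  apply/negP=> /andP[/setUP[/gA a|/gB a] /gC c].
    by move: il; rewrite -a -c eqxx.
  by move: jl; rewrite -a -c eqxx.
by rewrite subset_leq_card // !subUset AS BS CS.
Qed.

Lemma cardsI_setD1 A [B : {set T}] [w : T] : w \in B ->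
  #|A :&: B| = (w \in A) + #|(B :\ w) :&: A|.
Proof. by move=> wB; rewrite -{1}(setD1K wB) setIC cardsU1I // setD11. Qed.

End FinsetFacts.

Lemma leq_bin_sub N j a : a <= N ->
  'C(N, j.+1) <= 'C(N - a, j.+1) + a * 'C(N.-1, j).
Proof.
elim: a => [|a IH] aN; first by rewrite subn0 mul0n addn0.
have := IH (ltnW aN).
have -> : N - a = (N - a.+1).+1 by lia.
have : 'C(N - a.+1, j) <= 'C(N.-1, j) by apply: leq_bin2l; lia.
rewrite binS mulSn; lia.
Qed.

Lemma tau_leq_cover n t (G : {set {set 'I_n}}) S : tcover t G S -> tau t G <= #|S|.
Proof.
move=> covS; rewrite /tau; elim: (index_enum _) (mem_index_enum S) => // X r IHr.
rewrite inE big_cons => /predU1P[<-|/IHr le_r]; first by rewrite covS geq_minl.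
by case: ifP => _ //; exact: leq_trans (geq_minr _ _) le_r.
Qed.

Section CoversDetermineFamily.
Variables (n k t : nat) (F : {set {set 'I_n}}) (M W : {set 'I_n}).
Implicit Types (G H : {set 'I_n}) (w : 'I_n).
Hypotheses (M_small : k + 2 < n) (t_gt0 : 0 < t).
Hypotheses (F_k : F \subset ksubsets setT k) (F_int : t_intersecting t F).
Hypotheses (cardM : #|M| = k + 2) (W_M : W \subset M) (cardW : #|W| = t + 2).
Hypothesis near_W_cover : forall T : {set 'I_n}, T \subset M -> #|T| = t + 2 ->
  t + 1 <= #|T :&: W| -> tcover t F T.
Hypothesis cover_sub_M : forall T : {set 'I_n}, #|T| = t + 2 -> tcover t F T -> T \subset M.

Lemma card_memF [G] : G \in F -> #|G| = k.
Proof. by move=> GF; have := subsetP F_k G GF; rewrite inE => /andP[_ /eqP]. Qed.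

Lemma meetW_memF [G] : G \in F -> t <= #|G :&: W|.
Proof.
move=> GF; rewrite setIC.
have /forall_inP covW : tcover t F W.
  by apply: near_W_cover; rewrite // setIid cardW leq_add2l.
exact: covW.
Qed.

Lemma cardWD1 [w] : w \in W -> #|W :\ w| = t + 1.
Proof.
by move=> wW; have := cardsD1 w W; rewrite wW cardW addn2 add1n => -[<-]; rewrite addn1.
Qed.

Lemma diffMW_sub [H w] : H \in F -> w \in H :&: W -> #|H :&: W| = t ->
  M :\: W \subset H.
Proof.
move=> HF /setIP[wH wW] cHW; apply/subsetP=> m /setDP[mM mW].
have mWw : m \notin W :\ w by rewrite !inE (negbTE mW) andbF.
have cWw := cardWD1 wW.
have TM : m |: W :\ w \subset M.
  by rewrite subUset sub1set mM (subset_trans (subD1set W w) W_M).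
have cT : #|m |: W :\ w| = t + 2 by rewrite cardsU1 mWw cWw /= add1n addn1 addn2.
have TW : #|(m |: W :\ w) :&: W| = t + 1.
  by rewrite cardsU1I // (negbTE mW) (setIidPl (subD1set W w)).
have /forall_inP covT : tcover t F (m |: W :\ w) by apply: near_W_cover; rewrite ?TW.
have := covT H HF; rewrite cardsU1I //; have := cardsI_setD1 H wW; rewrite wH cHW.
by case: (m \in H) => //; rewrite add1n add0n => ->; rewrite ltnn.
Qed.

Lemma sub_M_of_meetW [H w] : H \in F -> w \in H :&: W -> #|H :&: W| = t ->
  H \subset M.
Proof.
move=> HF wHW cHW.
suff -> : H = (H :&: W) :|: (M :\: W) by rewrite subUset subsetDl subIset ?W_M ?orbT.
apply/eqP; rewrite eq_sym eqEcard subUset subsetIl (diffMW_sub HF wHW cHW).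
rewrite (card_memF HF) (cardsU_sub_compl (subsetIr _ _) (subsetDr _ _)).
have := subset_leq_card W_M; rewrite cHW cardsDS // cardM cardW; lia.
Qed.

Lemma meetsMW_of_meetW [G] : G \in F -> #|G :&: W| = t + 1 ->
  G :&: (M :\: W) != set0.
Proof.
move=> GF cGW; apply/negP=> /eqP GMW.
have [w0 w0W w0G] : exists2 w0, w0 \in W & w0 \notin G.
  apply/subsetPn/negP=> /setIidPr GW; move: cGW; rewrite GW cardW; lia.
have [y yM] : exists y, y \notin M.
  have : 0 < #|~: M| by have := cardsC M; rewrite card_ord cardM; lia.
  by case/card_gt0P=> y; rewrite inE; exists y.
have yW : y \notin W :\ w0 by apply: contra yM => /setD1P[_ /(subsetP W_M)].
have cT : #|y |: W :\ w0| = t + 2.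
  by rewrite cardsU1 yW (cardWD1 w0W) /= add1n addn1 addn2.
have : ~~ tcover t F (y |: W :\ w0).
  by apply: contra yM => /(cover_sub_M _ cT) /subsetP; apply; apply: setU11.
rewrite negb_forall_in => /exists_inP[H HF]; rewrite -ltnNge cardsU1I // => lt_t.
have := meetW_memF HF; rewrite (cardsI_setD1 H w0W) => ge_t.
have w0H : w0 \in H.
  apply: contraLR (lt_t) => /negbTE w0H; rewrite -leqNgt.
  by apply: leq_trans ge_t _; rewrite w0H leq_add2r.
have cHW : #|H :&: W| = t.
  apply/eqP; rewrite eqn_leq (cardsI_setD1 H w0W) ge_t andbT w0H.
  exact: leq_ltn_trans (leq_addl _ _) lt_t.
have w0HW : w0 \in H :&: W by rewrite inE w0H.
have H_M := sub_M_of_meetW HF w0HW cHW.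
have GH_sub : G :&: H \subset (H :&: W) :\ w0.
  apply/subsetP=> x /setIP[xG xH]; rewrite !inE xH /=.
  apply/andP; split; first by apply: contraNneq w0G => <-.
  apply: contraT => xW.
  have : x \in G :&: (M :\: W) by rewrite !inE xG xW (subsetP H_M x xH).
  by rewrite GMW inE.
have := leq_trans (F_int G H GF HF) (subset_leq_card GH_sub).
by have := cardsD1 w0 (H :&: W); rewrite w0HW cHW add1n => ->; rewrite ltnn.
Qed.

Lemma F_sub_typeII : F \subset typeII k t M W.
Proof.
apply/subsetP=> G GF; rewrite /typeII /ksubsets !inE subsetT (card_memF GF) eqxx /=.
have le_t2 : #|G :&: W| <= t + 2 by rewrite -cardW subset_leq_card ?subsetIr.
have := meetW_memF GF; rewrite leq_eqVlt => /predU1P[eGW|].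
  have [w wGW] : exists w, w \in G :&: W by apply/set0Pn; rewrite -card_gt0 -eGW.
  by rewrite (sub_M_of_meetW GF wGW (esym eGW)) -eGW eqxx !orbT.
rewrite leq_eqVlt => /predU1P[eGW|gt_t1].
  by rewrite -eGW eqxx meetsMW_of_meetW ?orbT // -eGW addn1.
have /eqP eW : G :&: W == W by rewrite eqEcard subsetIr cardW; lia.
by rewrite -eW subsetIl.
Qed.

End CoversDetermineFamily.

Section TypeIIFamily.
Context {n k t : nat} {M W : {set 'I_n}}.
Hypotheses (cardM : #|M| = k + 2) (W_M : W \subset M) (cardW : #|W| = t + 2).
Implicit Types (A B G X : {set 'I_n}) (m : 'I_n).

Lemma card_diffMW : #|M :\: W| = k - t.
Proof. by rewrite cardsDS // cardM cardW subnDr. Qed.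

Lemma typeII_k_uniform : typeII k t M W \subset ksubsets setT k.
Proof.
apply/subsetP=> A; rewrite /typeII /ksubsets !inE subsetT.
by case/orP=> [/orP[]|] /andP[/andP[_ ->]].
Qed.

Lemma typeII_shape [A] : A \in typeII k t M W ->
  [/\ t <= #|A :&: W|,
      #|A :&: W| = t.+1 -> A :&: (M :\: W) != set0 &
      #|A :&: W| = t -> M :\: W \subset A].
Proof.
rewrite /typeII /ksubsets !inE => /orP[/orP[]|].
- by case/andP=> _ WA; rewrite (setIidPr WA) cardW; split=> [|e|e]; lia.
- by case/andP=> _ /andP[/eqP-> MW]; split=> // e; lia.
case/andP=> /andP[AM /eqP cA] /eqP AW; split=> [|e|_]; rewrite ?AW //; first lia.
suff <- : A :\: W = M :\: W by apply: subsetDl.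
apply/eqP; rewrite eqEcard setSD //= card_diffMW.
by have := cardsID W A; rewrite AW cA => <-; rewrite addKn.
Qed.

Lemma typeII_t_intersecting : t + 2 <= k -> t_intersecting t (typeII k t M W).
Proof.
move=> k_ge A B.
wlog le_ab : A B / #|A :&: W| <= #|B :&: W|.
  move=> IH AI BI; case: (leqP #|A :&: W| #|B :&: W|) => [|/ltnW] le; first exact: IH.
  by rewrite setIC; apply: IH.
move=> AI BI.
have [loA _ sA] := typeII_shape AI.
have [loB pB sB] := typeII_shape BI.
have le_sum := leq_add_cardsI A B W; rewrite cardW in le_sum.
have le_AB : #|A :&: B :&: W| + #|A :&: B :&: (M :\: W)| <= #|A :&: B|.
  by rewrite -(cardsID W (A :&: B)) leq_add2l subset_leq_card // !setDE setIS // subsetIr.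
have [lt_a|le_a] := ltnP t #|A :&: W|; first lia.
have MW_A : M :\: W \subset A by apply: sA; lia.
have eY : A :&: B :&: (M :\: W) = B :&: (M :\: W).
  by rewrite -setIA; apply/setIidPr; rewrite subIset // MW_A orbT.
rewrite eY in le_AB.
have [lt_b|le_b] := ltnP t.+1 #|B :&: W|; first lia.
have [e_b|e_b] : #|B :&: W| = t \/ #|B :&: W| = t.+1 by lia.
  rewrite (setIidPr (sB e_b)) card_diffMW in le_AB; lia.
have := pB e_b; rewrite -card_gt0; lia.
Qed.

Definition supW_family : {set {set 'I_n}} :=
  [set W :|: B | B in ksubsets (~: W) (k - t - 2)].

Definition near_family : {set {set 'I_n}} :=
  [set p.1.1 :|: (p.1.2 |: p.2)
     | p in setX (setX (ksubsets W t.+1) (M :\: W)) (ksubsets (~: M) (k - t - 2))].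

Lemma card_supW_family : #|supW_family| = 'C(n - t - 2, k - t - 2).
Proof.
rewrite card_in_imset.
  by rewrite /ksubsets cards_draws cardsCs setCK card_ord cardW subnDA.
move=> B1 B2; rewrite /ksubsets !inE => /andP[B1W _] /andP[B2W _] eB.
have W_cc : W \subset ~: ~: W by rewrite setCK.
by rewrite -(setIU_sub_compl B1W W_cc) setUC eB setUC setIU_sub_compl.
Qed.

Lemma supW_family_typeII : t + 2 <= k -> supW_family \subset typeII k t M W.
Proof.
move=> k_ge; apply/subsetP=> G /imsetP[B]; rewrite /ksubsets inE => /andP[BW /eqP cB] ->.
rewrite /typeII /ksubsets !inE subsetT subsetUl (cardsU_sub_compl (subxx W) BW).
by rewrite cardW cB; apply/eqP; lia.
Qed.

Lemma meetW_supW_family : {in supW_family, forall G, #|G :&: W| = t + 2}.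
Proof. by move=> G /imsetP[B _ ->]; rewrite (setIidPr (subsetUl _ _)). Qed.

Lemma near_traces [X B m] : X \subset W -> m \in M -> m \notin W -> B \subset ~: M ->
  [/\ (X :|: (m |: B)) :&: W = X,
      (X :|: (m |: B)) :&: (M :\: W) = [set m] &
      (X :|: (m |: B)) :&: ~: M = B].
Proof.
move=> X_W mM mW B_M.
have B_cW : B \subset ~: W by rewrite (subset_trans B_M) // setCS.
split.
- by apply: setIU_sub_compl; rewrite // subUset sub1set inE mW.
- rewrite setUCA; apply: setIU_sub_compl; first by rewrite sub1set inE mW.
  by rewrite setCD subUset (subset_trans B_M (subsetUl _ _)) (subset_trans X_W (subsetUr _ _)).
rewrite setUA [_ :|: B]setUC; apply: setIU_sub_compl => //.
by rewrite setCK subUset sub1set mM (subset_trans X_W W_M).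
Qed.

Lemma card_near_family : #|near_family| = (t + 2) * (k - t) * 'C(n - k - 2, k - t - 2).
Proof.
rewrite card_in_imset.
  rewrite !cardsX /ksubsets !cards_draws cardW card_diffMW addn2 binSn.
  by rewrite cardsCs setCK card_ord cardM subnDA.
move=> [[X1 m1] B1] [[X2 m2] B2]; rewrite /ksubsets !inE /=.
move=> /andP[/andP[/andP[X1W _] /andP[m1W m1M]] /andP[B1M _]].
move=> /andP[/andP[/andP[X2W _] /andP[m2W m2M]] /andP[B2M _]] e12.
have [e1 e2 e3] := near_traces X1W m1M m1W B1M.
have [f1 f2 f3] := near_traces X2W m2M m2W B2M.
have -> : X1 = X2 by rewrite -e1 e12 f1.
have -> : B1 = B2 by rewrite -e3 e12 f3.
by have -> : m1 = m2 by apply/set1_inj; rewrite -e2 e12 f2.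
Qed.

Lemma near_familyP G : G \in near_family ->
  exists X B m, [/\ G = X :|: (m |: B), X \in ksubsets W t.+1, m \in M, m \notin W
                  & B \in ksubsets (~: M) (k - t - 2)].
Proof.
case/imsetP=> [[[X m] B]]; rewrite !in_setX /= => /andP[/andP[XW /setDP[mM mW]] BM] ->.
by exists X, B, m.
Qed.

Lemma near_family_typeII : t + 2 <= k -> near_family \subset typeII k t M W.
Proof.
move=> k_ge; apply/subsetP=> G /near_familyP[X [B [m [-> XW mM mW BM]]]].
move: XW BM; rewrite /ksubsets !inE => /andP[X_W /eqP cX] /andP[B_M /eqP cB].
have [e1 e2 _] := near_traces X_W mM mW B_M.
have mB : m \notin B by apply: contraL mM => /(subsetP B_M); rewrite inE.
have mB_cW : m |: B \subset ~: W.
  by rewrite subUset sub1set inE mW (subset_trans B_M) // setCS.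
rewrite subsetT (cardsU_sub_compl X_W mB_cW) cardsU1 mB.
rewrite e1 e2 cX cB eqxx /=; apply/orP; left; apply/orP; right.
by apply/andP; split; [apply/eqP; lia | apply/set0Pn; exists m; rewrite set11].
Qed.

Lemma meetW_near_family : {in near_family, forall G, #|G :&: W| = t.+1}.
Proof.
move=> G /near_familyP[X [B [m [-> XW mM mW BM]]]].
move: XW BM; rewrite /ksubsets !inE => /andP[X_W /eqP cX] /andP[B_M _].
by have [-> _ _] := near_traces X_W mM mW B_M.
Qed.

Lemma exists_typeII_meetW : exists2 G, G \in typeII k t M W & #|G :&: W| = t.
Proof.
have : 0 < #|ksubsets W t| by rewrite /ksubsets cards_draws cardW bin_gt0 leq_addr.
case/card_gt0P=> S; rewrite /ksubsets inE => /andP[S_W /eqP cS].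
have eSW := setIU_sub_compl S_W (subsetDr M W).
exists (S :|: (M :\: W)); last by rewrite eSW.
rewrite /typeII /ksubsets !inE; apply/orP; right.
rewrite subUset (subset_trans S_W W_M) subsetDl eSW cS eqxx andbT.
rewrite (cardsU_sub_compl S_W (subsetDr _ _)) cS card_diffMW subnKC ?eqxx //.
by have := subset_leq_card W_M; rewrite cardM cardW leq_add2r.
Qed.

Lemma card_typeII_lb : t + 2 <= k ->
  'C(n - t - 2, k - t - 2) + (t + 2) * (k - t) * 'C(n - k - 2, k - t - 2) + 1
    <= #|typeII k t M W|.
Proof.
move=> k_ge; have [G0 G0_II G0W] := exists_typeII_meetW.
rewrite -card_supW_family -card_near_family -(cards1 G0).
apply: (leq_cards_separated3 _ _ _ _ (fun G => #|G :&: W|) (t + 2) t.+1 t).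
- exact: supW_family_typeII.
- exact: near_family_typeII.
- by rewrite sub1set.
- exact: meetW_supW_family.
- exact: meetW_near_family.
- by move=> G /set1P ->.
all: lia.
Qed.

Lemma card_typeII_gt : 2 * k < n -> t + 3 <= k ->
  ((((t + 2) * (k - t) + 1) * 'C(n - t - 2, k - t - 2))%:Z
     - ((t + 2) * (k - t) ^ 2 * 'C(n - t - 3, k - t - 3))%:Z < #|typeII k t M W|%:Z)%R.
Proof.
move=> n_gt k_ge; rewrite ltrBlDr -PoszD ltz_nat.
have k_ge2 : t + 2 <= k by lia.
have lb := card_typeII_lb k_ge2.
have bl : 'C(n - t - 2, k - t - 2)
    <= 'C(n - k - 2, k - t - 2) + (k - t) * 'C(n - t - 3, k - t - 3).
  have -> : k - t - 2 = (k - t - 3).+1 by lia.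
  have -> : n - k - 2 = n - t - 2 - (k - t) by lia.
  have -> : n - t - 3 = (n - t - 2).-1 by lia.
  by apply: leq_bin_sub; lia.
move: lb bl; set N := #|_|.
set x := 'C(n - t - 2, _); set y := 'C(n - k - 2, _); set z := 'C(n - t - 3, _).
move=> lb bl; have := leq_mul (leqnn ((t + 2) * (k - t))) bl.
nia.
Qed.

End TypeIIFamily.

Theorem lemma2p9 (n k t : nat) (F : {set {set 'I_n}}) (M W : {set 'I_n}) :
  2 * k < n -> t + 3 <= k ->
  maximal_t_intersecting k t F ->
  tau t F = t + 2 ->
  tau t (Tcov t F) = t + 1 ->
  M \in ksubsets setT (k + 2) -> W \in ksubsets M (t + 2) ->
  Tcov t F = [set T in ksubsets M (t + 2) | t + 1 <= #|T :&: W|] ->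
  F = typeII k t M W /\
  (#|F|%:Z >
     (((t + 2) * (k - t) + 1) * 'C(n - t - 2, k - t - 2))%:Z
     - ((t + 2) * (k - t) ^ 2 * 'C(n - t - 3, k - t - 3))%:Z)%R.
Proof.
move=> n_gt k_ge [F_k F_int F_max] tauF _ M_k W_M_t covers.
move: M_k W_M_t; rewrite !inE => /andP[_ /eqP cardM] /andP[W_M /eqP cardW].
have t_gt0 : 0 < t.
  rewrite lt0n; apply/eqP=> t0.
  have /tau_leq_cover : tcover t F set0 by apply/forall_inP=> A _; rewrite t0.
  by rewrite tauF cards0 t0.
have near_W_cover (T : {set 'I_n}) :
    T \subset M -> #|T| = t + 2 -> t + 1 <= #|T :&: W| -> tcover t F T.
  move=> T_M cT TW; have : T \in Tcov t F by rewrite covers !inE T_M cT eqxx.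
  by rewrite inE => /andP[].
have cover_sub_M (T : {set 'I_n}) : #|T| = t + 2 -> tcover t F T -> T \subset M.
  move=> cT covT; have : T \in Tcov t F by rewrite inE covT cT tauF eqxx.
  by rewrite covers !inE => /andP[/andP[]].
have -> : F = typeII k t M W.
  symmetry; apply: F_max.
  - exact: typeII_k_uniform.
  - by apply: typeII_t_intersecting => //; lia.
  - by apply: F_sub_typeII => //; lia.
by split=> //; apply: card_typeII_gt cardM W_M cardW n_gt k_ge.
Qed.
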